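(* Define \begin{align*} & \mathcal{I} = \int_{-\infty}^{+\infty} \Big\{ \frac{y\, e^{-y^{2}}}{\sqrt{\pi}\, \mathrm{erfc}(y)} - \chi_{(0,+\infty)}(y) \Big[ y^{2}+\frac{1}{2} \Big] \Big\}dy, \qquad \mathcal{I}_1 = \int_{-\infty}^{+\infty} \Big\{ \frac{e^{-y^{2}}}{\sqrt{\pi}\, \mathrm{erfc}(y)} - \chi_{(0,+\infty)}(y) \Big[ y + \frac{y}{2(1+y^{2})} \Big] \Big\}dy,\\ & \mathcal{I}_{2} = \int_{-\infty}^{+\infty} \Big\{ \frac{y^{3}e^{-y^{2}}}{\sqrt{\pi} \, \mathrm{erfc}(y)} - \chi_{(0,+\infty)}(y) \Big[ y^{4}+\frac{y^{2}}{2}-\frac{1}{2} \Big] \Big\}dy, \qquad \mathcal{I}_{3} = \int_{-\infty}^{+\infty} \Big\{ \Big( \frac{e^{-y^{2}}}{\sqrt{\pi} \, \mathrm{erfc}(y)} \Big)^{2} - \chi_{(0,+\infty)}(y) \big[ y^{2}+1 \big] \Big\} dy,\\ & \mathcal{I}_{4} = \int_{-\infty}^{+\infty} \Big\{ \Big( \frac{y \, e^{-y^{2}}}{\sqrt{\pi} \, \mathrm{erfc}(y)} \Big)^{2} - \chi_{(0,+\infty)}(y)\Big[ y^{4}+y^{2}-\frac{3}{4} \Big] \Big\} dy. \end{align*} Then $\mathcal{I}_{1} = \frac{\ln (2\sqrt{\pi})}{2}$, $\mathcal{I}_{3} = \mathcal{I}$ and $\mathcal{I}_{4} = \mathcal{I}_{2}-\mathcal{I}$.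 In particular, for any $b>0$, $\rho>0$ and any real numbers $T_1,T_2$ and $\Omega\neq0$, $$\sqrt{2}b\rho^{b}\frac{ \rho^{2b} T_{2} -5 T_{1} }{ \Omega} \mathcal{I} + \frac{10\sqrt{2} b \rho^{b}}{3} \frac{T_{1}}{\Omega} \mathcal{I}_{2} + \sqrt{2} b \rho^{2b} \frac{T_{1}}{\Omega} \Big( \frac{2}{3\rho^{b}} - \rho^{b} \frac{T_{1}}{\Omega} \Big) \mathcal{I}_{3} - \frac{10 \sqrt{2} b \rho^{b}}{3} \frac{T_{1}}{\Omega} \mathcal{I}_{4} = \sqrt{2} \,\mathcal{I} \,b\rho^{b}\Big( \rho^{2b} \frac{T_{2}}{\Omega} - \frac{T_{1}}{\Omega} - \rho^{2b} \frac{T_{1}^{2}}{\Omega^{2}} \Big).$$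
   Context: $\mathrm{erfc}(t) = \frac{2}{\sqrt{\pi}}\int_{t}^{\infty} e^{-x^{2}}dx$ and $\chi_{(0,+\infty)}$ is the indicator function of $(0,+\infty)$. (In the paper, $T_1, T_2, \Omega$ are the quantities $\mathsf{T}_1(b\rho^{2b}),\mathsf{T}_2(b\rho^{2b})$ and $e^{u_1+\dots+u_m}$; the identity holds for arbitrary values.) *)

From Stdlib Require Import Reals.
From Coquelicot Require Import Coquelicot.
Open Scope R_scope.

Definition erfc (t : R) : R :=
  2 / sqrt PI * RInt_gen (fun x => exp (- x ^ 2)) (at_point t) (Rbar_locally p_infty).

Definition chi_pos (y : R) : R := if Rlt_dec 0 y then 1 else 0.

Definition whole_line (f : R -> R) : Prop :=
  ex_RInt_gen f (Rbar_locally m_infty) (Rbar_locally p_infty).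
Definition int_R (f : R -> R) : R :=
  RInt_gen f (Rbar_locally m_infty) (Rbar_locally p_infty).

Definition g (y : R) : R := exp (- y ^ 2) / (sqrt PI * erfc y).

Definition fI  (y : R) : R := y * g y - chi_pos y * (y ^ 2 + 1 / 2).
Definition fI1 (y : R) : R := g y - chi_pos y * (y + y / (2 * (1 + y ^ 2))).
Definition fI2 (y : R) : R := y ^ 3 * g y - chi_pos y * (y ^ 4 + y ^ 2 / 2 - 1 / 2).
Definition fI3 (y : R) : R := (g y) ^ 2 - chi_pos y * (y ^ 2 + 1).
Definition fI4 (y : R) : R := (y * g y) ^ 2 - chi_pos y * (y ^ 4 + y ^ 2 - 3 / 4).

Definition I  : R := int_R fI.
Definition I1 : R := int_R fI1.
Definition I2 : R := int_R fI2.
Definition I3 : R := int_R fI3.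
Definition I4 : R := int_R fI4.

(* Write T y := int_y^oo exp (-x^2) dx, so that sqrt pi * erfc y = 2 T y and the common factor of
   the integrands is g = exp (-y^2) / (2 T).  As T' = -exp (-y^2), g solves the Riccati equation
   g' = 2 g^2 - 2 y g, hence
     g = (- ln T / 2)',   g^2 - y g = (g / 2)',   (y g)^2 - y^3 g + y g = (y^2 g / 2)'.
   So on each half-line the integrands of I1, I3 - I and I4 - (I2 - I) are exact derivatives (on
   (0, +oo) the chi-terms are the derivatives of the growth of g y = y + 1/(2y) + O(y^-3)); the
   boundary terms at 0 cancel, and those at -oo and +oo give ln (sqrt pi) / 2 and ln 2 / 2 for I1
   and vanish otherwise.  I and I2 converge by domination: g <= exp (-y^2) for y <= 0, and the
   first terms of the asymptotic expansion of T give |y^3 g - y^4 - y^2/2 + 1/2| <= 2 / y^2 for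
   y >= 2.  The final identity is then algebra. *)

From Stdlib Require Import Reals Lra Psatz.
From Coquelicot Require Import Coquelicot.
Open Scope R_scope.

Lemma is_lim_of_abs_le (u v : R -> R) (x : Rbar) (l : R) :
  Rbar_locally' x (fun y => Rabs (u y - l) <= v y) -> is_lim v x 0 -> is_lim u x l.
Proof.
  intros Huv Hv.
  apply (is_lim_le_le_loc (fun y => l - v y) (fun y => l + v y)).
  - revert Huv; apply filter_imp; intros y Hy.
    apply Rabs_le_between' in Hy; lra.
  - replace (Finite l) with (Finite (l - 0)) by (f_equal; ring).
    apply (is_lim_minus' (fun _ => l)); [apply is_lim_const | exact Hv].
  - replace (Finite l) with (Finite (l + 0)) by (f_equal; ring).
    apply (is_lim_plus' (fun _ => l)); [apply is_lim_const | exact Hv].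
Qed.

Lemma is_lim_div_p_infty (C : R) : is_lim (fun y => C / y) p_infty 0.
Proof.
  replace (Finite 0) with (Rbar_mult C (Rbar_inv p_infty)) by (simpl; f_equal; ring).
  apply is_lim_scal_l, is_lim_inv; [apply is_lim_id | discriminate].
Qed.

Lemma is_lim_div_m_infty (C : R) : is_lim (fun y => C / y) m_infty 0.
Proof.
  replace (Finite 0) with (Rbar_mult C (Rbar_inv m_infty)) by (simpl; f_equal; ring).
  apply is_lim_scal_l, is_lim_inv; [apply is_lim_id | discriminate].
Qed.

Lemma is_lim_scal_l_0 (f : R -> R) (c : R) (x : Rbar) :
  is_lim f x 0 -> is_lim (fun y => c * f y) x 0.
Proof.
  intros Hf; replace (Finite 0) with (Rbar_mult c 0) by (simpl; f_equal; ring).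
  now apply is_lim_scal_l.
Qed.

Lemma is_lim_p_infty_of_abs_mul_le (u : R -> R) (l C M : R) :
  (forall y, M <= y -> Rabs (y * (u y - l)) <= C) -> is_lim u p_infty l.
Proof.
  intros Hu; apply (is_lim_of_abs_le _ (fun y => C / y)); [| apply is_lim_div_p_infty].
  exists (Rmax M 0); intros y Hy.
  pose proof (Rmax_l M 0); pose proof (Rmax_r M 0).
  specialize (Hu y ltac:(lra)); rewrite Rabs_mult, Rabs_pos_eq in Hu by lra.
  apply Rmult_le_reg_l with y; [lra|]; replace (y * (C / y)) with C by (field; lra); exact Hu.
Qed.

Lemma le_is_lim_p_infty_of_increasing (f df : R -> R) (a L : R) :
  (forall x, a <= x -> is_derive f x (df x)) -> (forall x, a <= x -> 0 < df x) ->
  is_lim f p_infty L -> f a <= L.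
Proof.
  intros Hder Hpos HL.
  apply (is_lim_le_loc (fun _ => f a) f p_infty (f a) L); [| apply is_lim_const | exact HL].
  exists a; intros x Hx; left.
  apply (incr_function_le f a p_infty df); simpl; try lra; auto.
  intros z Hz _; apply Hpos, Hz.
Qed.

Lemma abs_div_le (N D B : R) : 0 < D -> Rabs N <= B * D -> Rabs (N / D) <= B.
Proof.
  intros HD HN; unfold Rdiv; rewrite Rabs_mult, Rabs_inv, (Rabs_pos_eq D) by lra.
  apply Rmult_le_reg_r with D; [exact HD|]; rewrite Rmult_assoc, Rinv_l by lra; lra.
Qed.

Lemma abs_le_div_sq (e y C : R) : 0 < y -> Rabs (y ^ 2 * e) <= C -> Rabs e <= C / y ^ 2.
Proof.
  intros Hy He; rewrite Rabs_mult, Rabs_pos_eq in He by nra.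
  apply Rmult_le_reg_l with (y ^ 2); [nra|]; replace (y ^ 2 * (C / y ^ 2)) with C by (field; lra).
  exact He.
Qed.

Lemma filterlim_at_point (F : R -> R) (c : R) : filterlim F (at_point c) (locally (F c)).
Proof. intros P HP; exact (locally_singleton _ _ HP). Qed.

(* Unlike [is_RInt_gen_Derive], only asks for a derivative on a set [D] containing the eventual
   integration intervals, e.g. a closed half-line. *)
Lemma is_RInt_gen_derive {Fa Fb : (R -> Prop) -> Prop} {FFa : Filter Fa} {FFb : Filter Fb}
    (f F : R -> R) (D : R -> Prop) (la lb : R) :
  filter_prod Fa Fb
    (fun ab => forall x, Rmin (fst ab) (snd ab) <= x <= Rmax (fst ab) (snd ab) -> D x) ->
  (forall x, D x -> is_derive F x (f x)) -> (forall x, D x -> continuous f x) ->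
  filterlim F Fa (locally la) -> filterlim F Fb (locally lb) ->
  is_RInt_gen f Fa Fb (lb - la).
Proof.
  intros HD Hder Hcont Ha Hb P HP.
  assert (Hlim : filterlim (fun ab => F (snd ab) + - F (fst ab))
                   (filter_prod Fa Fb) (locally (lb - la))).
  { eapply (filterlim_comp_2 _ _ Rplus).
    - exact (filterlim_comp _ _ _ snd F _ _ _ filterlim_snd Hb).
    - apply (filterlim_comp _ _ _ fst (fun x => - F x) _ _ _ filterlim_fst).
      exact (filterlim_comp _ _ _ F Ropp _ _ _ Ha (filterlim_opp la)).
    - apply (filterlim_Rbar_plus lb (- la) (lb - la)); reflexivity. }
  assert (HPlim : filter_prod Fa Fb (fun ab => P (F (snd ab) + - F (fst ab))))
    by exact (Hlim P HP).
  generalize (filter_and _ _ HD HPlim).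
  unfold filtermapi; apply filter_imp; intros [a b] [Hab HPab].
  exists (minus (F b) (F a)); split; [|exact HPab].
  apply (is_RInt_derive (V := R_CompleteNormedModule)); intros x Hx;
    [apply Hder | apply Hcont]; exact (Hab x Hx).
Qed.

Lemma is_RInt_gen_derive_m_infty (f F : R -> R) (c L : R) :
  (forall x, x <= c -> is_derive F x (f x)) -> (forall x, x <= c -> continuous f x) ->
  is_lim F m_infty L -> is_RInt_gen f (Rbar_locally m_infty) (at_point c) (F c - L).
Proof.
  intros Hder Hcont HL.
  apply (is_RInt_gen_derive f F (fun x => x <= c)); auto using filterlim_at_point.
  apply (Filter_prod _ _ _ (fun a => a < c) (fun b => b = c)); [now exists c | reflexivity |].
  intros a b Ha -> x; simpl; rewrite Rmin_left, Rmax_right by lra; lra.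
Qed.

Lemma is_RInt_gen_derive_p_infty (f F : R -> R) (c L : R) :
  (forall x, c <= x -> is_derive F x (f x)) -> (forall x, c <= x -> continuous f x) ->
  is_lim F p_infty L -> is_RInt_gen f (at_point c) (Rbar_locally p_infty) (L - F c).
Proof.
  intros Hder Hcont HL.
  apply (is_RInt_gen_derive f F (fun x => c <= x)); auto using filterlim_at_point.
  apply (Filter_prod _ _ _ (fun a => a = c) (fun b => c < b)); [reflexivity | now exists c |].
  intros a b -> Hb x; simpl; rewrite Rmin_left, Rmax_right by lra; lra.
Qed.

Lemma is_RInt_gen_at_point_lim {F : (R -> Prop) -> Prop} {FF : Filter F}
    (f : R -> R) (c l : R) :
  (forall b, ex_RInt f c b) -> filterlim (fun b => RInt f c b) F (locally l) ->
  is_RInt_gen f (at_point c) F l.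
Proof.
  intros Hex Hl P HP.
  apply (Filter_prod _ _ _ (fun a => a = c) (fun b => P (RInt f c b)));
    [reflexivity | exact (Hl P HP) |].
  intros a b -> Hb; exists (RInt f c b); split; [| exact Hb].
  apply (RInt_correct (V := R_CompleteNormedModule)), Hex.
Qed.

Lemma abs_RInt_le_antiderivative (f h H : R -> R) (u v : R) :
  (forall x, Rmin u v <= x <= Rmax u v ->
     is_derive H x (h x) /\ continuous h x /\ Rabs (f x) <= h x) ->
  ex_RInt f u v -> Rabs (RInt f u v) <= Rabs (H v - H u).
Proof.
  assert (Hle : forall u v, u <= v ->
    (forall x, u <= x <= v -> is_derive H x (h x) /\ continuous h x /\ Rabs (f x) <= h x) ->
    ex_RInt f u v -> Rabs (RInt f u v) <= Rabs (H v - H u)).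
  { clear u v; intros u v Huv Hx Hf.
    eapply Rle_trans; [|apply Rle_abs].
    apply (norm_RInt_le f h u v); [exact Huv | intros x Hxuv; apply Hx, Hxuv
          | apply (RInt_correct (V := R_CompleteNormedModule)), Hf |].
    apply (is_RInt_derive (V := R_CompleteNormedModule)); intros x Hxuv;
      rewrite Rmin_left, Rmax_right in Hxuv by exact Huv; apply Hx, Hxuv. }
  intros Hx Hf; destruct (Rle_or_lt u v) as [Huv | Hvu].
  - apply Hle; auto; intros x Hxuv; apply Hx; rewrite Rmin_left, Rmax_right; lra.
  - rewrite <- (opp_RInt_swap (V := R_CompleteNormedModule) f v u) by now apply ex_RInt_swap.
    rewrite Rabs_minus_sym; change (Rabs (- RInt f v u) <= Rabs (H u - H v)); rewrite Rabs_Ropp.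
    apply Hle; [lra | | now apply ex_RInt_swap].
    intros x Hxuv; apply Hx; rewrite Rmin_right, Rmax_left; lra.
Qed.

Lemma ex_RInt_gen_dominated {F : (R -> Prop) -> Prop} {FF : ProperFilter F}
    (f h H : R -> R) (D : R -> Prop) (c L : R) :
  F D -> (forall u v x, D u -> D v -> Rmin u v <= x <= Rmax u v -> D x) ->
  (forall x, continuous f x) ->
  (forall x, D x -> is_derive H x (h x)) -> (forall x, D x -> continuous h x) ->
  (forall x, D x -> Rabs (f x) <= h x) -> filterlim H F (locally L) ->
  ex_RInt_gen f (at_point c) F.
Proof.
  intros HD Dconv Hf Hder Hh Hdom HL.
  assert (Hex : forall a b, ex_RInt f a b)
    by (intros a b; apply (ex_RInt_continuous (V := R_CompleteNormedModule)); auto).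
  destruct (proj1 (filterlim_locally_cauchy (U := R_CompleteSpace) (F := F)
                     (fun b => RInt f c b))) as [l Hl].
  - intros eps.
    destruct (proj2 (filterlim_locally_cauchy (U := R_CompleteSpace) (F := F) H)
                (ex_intro _ L HL) eps) as [P [HP HPcauchy]].
    exists (fun x => P x /\ D x); split; [now apply filter_and|].
    intros u v [Pu Du] [Pv Dv].
    change (Rabs (RInt f c v - RInt f c u) < eps).
    assert (Hchasles : RInt f c u + RInt f u v = RInt f c v)
      by exact (RInt_Chasles (V := R_CompleteNormedModule) f c u v (Hex _ _) (Hex _ _)).
    replace (RInt f c v - RInt f c u) with (RInt f u v) by lra.
    eapply Rle_lt_trans; [apply (abs_RInt_le_antiderivative f h H) | exact (HPcauchy u v Pu Pv)].
    + intros x Hx; pose proof (Dconv u v x Du Dv Hx); auto.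
    + apply Hex.
  - exists l; now apply is_RInt_gen_at_point_lim.
Qed.

Notation is_int_R f l := (is_RInt_gen f (Rbar_locally m_infty) (Rbar_locally p_infty) l).

Lemma is_RInt_gen_split (f fl fr : R -> R) (c l1 l2 : R) :
  (forall x, x < c -> fl x = f x) -> (forall x, c < x -> fr x = f x) ->
  is_RInt_gen fl (Rbar_locally m_infty) (at_point c) l1 ->
  is_RInt_gen fr (at_point c) (Rbar_locally p_infty) l2 -> is_int_R f (l1 + l2).
Proof.
  intros Hl Hr H1 H2.
  apply (is_RInt_gen_Chasles f c).
  - apply (is_RInt_gen_ext fl); [|exact H1].
    apply (Filter_prod _ _ _ (fun a => a < c) (fun b => b = c)); [now exists c | reflexivity |].
    intros a b Ha -> x; simpl; rewrite Rmin_left, Rmax_right by lra; intros Hx; apply Hl; lra.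
  - apply (is_RInt_gen_ext fr); [|exact H2].
    apply (Filter_prod _ _ _ (fun a => a = c) (fun b => c < b)); [reflexivity | now exists c |].
    intros a b -> Hb x; simpl; rewrite Rmin_left, Rmax_right by lra; intros Hx; apply Hr; lra.
Qed.

Lemma is_RInt_gen_of_sub {Fa Fb : (R -> Prop) -> Prop} {FFa : Filter Fa} {FFb : Filter Fb}
    (f h : R -> R) (l : R) :
  is_RInt_gen f Fa Fb l -> is_RInt_gen (fun y => h y - f y) Fa Fb 0 -> is_RInt_gen h Fa Fb l.
Proof.
  intros Hf Hd.
  pose proof (is_RInt_gen_plus _ _ _ _ Hf Hd) as Hsum.
  change (is_RInt_gen (fun y => f y + (h y - f y)) Fa Fb (l + 0)) in Hsum.
  rewrite Rplus_0_r in Hsum.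
  apply (is_RInt_gen_ext (fun y => f y + (h y - f y))); [| exact Hsum].
  apply filter_forall; intros; simpl; ring.
Qed.

Lemma whole_line_int_R (f : R -> R) (l : R) : is_int_R f l -> whole_line f /\ int_R f = l.
Proof.
  intros Hf; split; [now exists l |].
  exact (is_RInt_gen_unique (V := R_CompleteNormedModule) f l Hf).
Qed.

(** * The Gaussian integral *)

(* For a function [f] unknown to [auto_derive], rewrite the [Derive f y] and prove the
   [ex_derive f y] it leaves behind, from [H : forall y, is_derive f y _]. *)
Ltac use_derive H :=
  repeat match goal with |- context [Derive ?f ?y] => rewrite (is_derive_unique f y _ (H y)) end;
  repeat match goal with |- _ /\ _ => split end;
  try exact Logic.I;
  try match goal with |- ex_derive ?f ?y => exact (ex_intro _ _ (H y)) end.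

Definition gauss (x : R) : R := exp (- x ^ 2).

Definition gauss_int (x : R) : R := RInt gauss 0 x.

Lemma gauss_pos (x : R) : 0 < gauss x.
Proof. apply exp_pos. Qed.

Lemma continuous_gauss (x : R) : continuous gauss x.
Proof. apply (ex_derive_continuous (V := R_NormedModule)); unfold gauss; auto_derive; auto. Qed.

Lemma ex_RInt_gauss (a b : R) : ex_RInt gauss a b.
Proof.
  apply (ex_RInt_continuous (V := R_CompleteNormedModule)); intros; apply continuous_gauss.
Qed.

Lemma is_derive_gauss_int (x : R) : is_derive gauss_int x (gauss x).
Proof.
  apply (is_derive_RInt (V := R_CompleteNormedModule) gauss gauss_int 0 x).
  - apply filter_forall; intros b.
    apply (RInt_correct (V := R_CompleteNormedModule)), ex_RInt_gauss.
  - apply continuous_gauss.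
Qed.

Lemma gauss_int_0 : gauss_int 0 = 0.
Proof. exact (RInt_point (V := R_CompleteNormedModule) 0 gauss). Qed.

Lemma gauss_int_nonneg (x : R) : 0 <= x -> 0 <= gauss_int x.
Proof.
  intros Hx; apply RInt_ge_0; [exact Hx | apply ex_RInt_gauss | intros t _; left; apply gauss_pos].
Qed.

Lemma gauss_int_nonpos (x : R) : x <= 0 -> gauss_int x <= 0.
Proof.
  intros Hx; unfold gauss_int.
  rewrite <- (opp_RInt_swap (V := R_CompleteNormedModule)) by apply ex_RInt_gauss.
  assert (0 <= RInt gauss x 0)
    by (apply RInt_ge_0; [exact Hx | apply ex_RInt_gauss | intros t _; left; apply gauss_pos]).
  change (- RInt gauss x 0 <= 0); lra.
Qed.

(* Feynman's trick: [gauss_int x ^ 2 + gauss_defect x] has derivative 0 and equals pi/4 at 0;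
   as [gauss_defect] vanishes at infinity, this evaluates the Gaussian integral. *)
Definition gauss_defect_integrand (x t : R) : R := exp (- x ^ 2 * (1 + t ^ 2)) / (1 + t ^ 2).

Definition gauss_defect (x : R) : R := RInt (gauss_defect_integrand x) 0 1.

Lemma Derive_gauss_defect_integrand (x t : R) :
  Derive (fun u => gauss_defect_integrand u t) x = -2 * x * exp (- x ^ 2 * (1 + t ^ 2)).
Proof.
  apply is_derive_unique; unfold gauss_defect_integrand; auto_derive; [auto | simpl; field; nra].
Qed.

Lemma continuity_2d_Derive_gauss_defect_integrand (x t : R) :
  continuity_2d_pt (fun u v => Derive (fun z => gauss_defect_integrand z v) u) x t.
Proof.
  apply (continuity_2d_pt_ext (fun u v => -2 * u * exp (- u ^ 2 * (1 + v ^ 2)))).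
  { intros u v; now rewrite Derive_gauss_defect_integrand. }
  apply continuity_2d_pt_mult.
  - apply continuity_2d_pt_mult; [apply continuity_2d_pt_const | apply continuity_2d_pt_id1].
  - apply continuity_1d_2d_pt_comp; [apply derivable_continuous_pt, derivable_pt_exp |].
    repeat first [ apply continuity_2d_pt_mult | apply continuity_2d_pt_opp
                 | apply continuity_2d_pt_plus | apply continuity_2d_pt_const
                 | apply continuity_2d_pt_id1 | apply continuity_2d_pt_id2 ].
Qed.

Lemma RInt_Derive_gauss_defect_integrand (x : R) :
  RInt (fun t => Derive (fun u => gauss_defect_integrand u t) x) 0 1 = -2 * gauss x * gauss_int x.
Proof.
  assert (Hex : ex_RInt (fun t => x * gauss (x * t + 0)) 0 1).
  { apply (ex_RInt_continuous (V := R_CompleteNormedModule)); intros t _.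
    apply (ex_derive_continuous (V := R_NormedModule)); unfold gauss; auto_derive; auto. }
  pose proof (RInt_scal (V := R_CompleteNormedModule) _ 0 1 (-2 * gauss x) Hex) as Hscal.
  change (RInt (fun t => -2 * gauss x * (x * gauss (x * t + 0))) 0 1
          = -2 * gauss x * RInt (fun t => x * gauss (x * t + 0)) 0 1) in Hscal.
  pose proof (RInt_comp_lin (V := R_CompleteNormedModule) gauss x 0 0 1 (ex_RInt_gauss _ _))
    as Hsubst.
  change (RInt (fun t => x * gauss (x * t + 0)) 0 1 = RInt gauss (x * 0 + 0) (x * 1 + 0))
    in Hsubst.
  rewrite (RInt_ext _ (fun t => -2 * gauss x * (x * gauss (x * t + 0)))), Hscal, Hsubst.
  - unfold gauss_int; do 2 f_equal; ring.
  - intros t _; rewrite Derive_gauss_defect_integrand; unfold gauss.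
    replace (- x ^ 2 * (1 + t ^ 2)) with (- x ^ 2 + - (x * t + 0) ^ 2) by ring.
    rewrite exp_plus; simpl; ring.
Qed.

Lemma continuous_gauss_defect_integrand (x t : R) : continuous (gauss_defect_integrand x) t.
Proof.
  apply (ex_derive_continuous (V := R_NormedModule)).
  unfold gauss_defect_integrand; auto_derive; nra.
Qed.

Lemma is_derive_gauss_defect (x : R) : is_derive gauss_defect x (-2 * gauss x * gauss_int x).
Proof.
  rewrite <- RInt_Derive_gauss_defect_integrand.
  apply is_derive_RInt_param.
  - apply filter_forall; intros u t _; unfold gauss_defect_integrand; auto_derive; nra.
  - intros t _; apply continuity_2d_Derive_gauss_defect_integrand.
  - apply filter_forall; intros u.
    apply (ex_RInt_continuous (V := R_CompleteNormedModule)); intros t _.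
    apply continuous_gauss_defect_integrand.
Qed.

Lemma gauss_defect_0 : gauss_defect 0 = PI / 4.
Proof.
  unfold gauss_defect; rewrite (RInt_ext _ (fun t => / (1 + t ^ 2))).
  2: { intros t _; unfold gauss_defect_integrand.
       replace (- 0 ^ 2 * (1 + t ^ 2)) with 0 by ring; rewrite exp_0; simpl; field; nra. }
  assert (Hatan : is_RInt (fun t => / (1 + t ^ 2)) 0 1 (atan 1 - atan 0)).
  { apply (is_RInt_derive (V := R_CompleteNormedModule) atan).
    - intros t _; apply is_derive_Reals, derivable_pt_lim_atan.
    - intros t _; apply (ex_derive_continuous (V := R_NormedModule)); auto_derive; nra. }
  rewrite (is_RInt_unique (V := R_CompleteNormedModule) _ _ _ _ Hatan), atan_1, atan_0; ring.
Qed.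

Lemma gauss_int_sq_add_defect (x : R) : gauss_int x ^ 2 + gauss_defect x = PI / 4.
Proof.
  set (phi := fun y => gauss_int y ^ 2 + gauss_defect y).
  assert (Hphi : forall y, is_derive phi y 0).
  { intros y; unfold phi; auto_derive; use_derive is_derive_gauss_int;
      use_derive is_derive_gauss_defect; ring. }
  assert (Hphi0 : phi 0 = PI / 4) by (unfold phi; rewrite gauss_int_0, gauss_defect_0; ring).
  change (phi x = PI / 4); rewrite <- Hphi0.
  destruct (Rtotal_order x 0) as [Hx | [-> | Hx]]; [| reflexivity |].
  - apply (eq_is_derive phi); auto.
  - symmetry; apply (eq_is_derive phi); auto.
Qed.

Lemma gauss_defect_bounds (x : R) : 0 < gauss_defect x <= gauss x.
Proof.
  assert (Hex : ex_RInt (gauss_defect_integrand x) 0 1).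
  { apply (ex_RInt_continuous (V := R_CompleteNormedModule)); intros t _.
    apply continuous_gauss_defect_integrand. }
  split.
  - apply RInt_gt_0; [lra | | intros t _; apply continuous_gauss_defect_integrand].
    intros t _; apply Rdiv_lt_0_compat; [apply exp_pos | nra].
  - replace (gauss x) with (RInt (fun _ => gauss x) 0 1)
      by (rewrite RInt_const; unfold scal; simpl; unfold mult; simpl; ring).
    apply RInt_le; [lra | exact Hex | apply ex_RInt_const |].
    intros t Ht; unfold gauss_defect_integrand, gauss.
    assert (exp (- x ^ 2 * (1 + t ^ 2)) <= exp (- x ^ 2)).
    { destruct (Rle_lt_or_eq_dec (- x ^ 2 * (1 + t ^ 2)) (- x ^ 2)) as [Hlt | ->];
        [nra | now left; apply exp_increasing | now right]. }
    pose proof (exp_pos (- x ^ 2 * (1 + t ^ 2))).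
    apply (Rle_trans _ (exp (- x ^ 2 * (1 + t ^ 2)))); [|lra].
    apply Rmult_le_reg_r with (1 + t ^ 2); [nra|].
    unfold Rdiv; rewrite Rmult_assoc, Rinv_l by nra; nra.
Qed.

Lemma sqrt_PI_pos : 0 < sqrt PI.
Proof. apply sqrt_lt_R0, PI_RGT_0. Qed.

Lemma sqrt_PI_div_2_sq : (sqrt PI / 2) ^ 2 = PI / 4.
Proof.
  replace ((sqrt PI / 2) ^ 2) with (sqrt PI * sqrt PI / 4) by field.
  rewrite sqrt_sqrt; [reflexivity | pose proof PI_RGT_0; lra].
Qed.

Lemma abs_gauss_int_lt (x : R) : Rabs (gauss_int x) < sqrt PI / 2.
Proof.
  pose proof (gauss_int_sq_add_defect x); pose proof (gauss_defect_bounds x).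
  pose proof sqrt_PI_div_2_sq; pose proof sqrt_PI_pos.
  apply Rabs_def1; nra.
Qed.

Lemma sq_poly_gauss_le (y : R) : (y ^ 2 + 2) ^ 2 * gauss y <= 4.
Proof.
  assert (Hexp : (1 + y ^ 2 / 2) ^ 2 <= exp (y ^ 2)).
  { replace (exp (y ^ 2)) with (exp (y ^ 2 / 2) * exp (y ^ 2 / 2))
      by (rewrite <- exp_plus; f_equal; field).
    pose proof (exp_ineq1_le (y ^ 2 / 2)); nra. }
  assert (Hinv : gauss y * exp (y ^ 2) = 1)
    by (unfold gauss; rewrite <- exp_plus; replace (- y ^ 2 + y ^ 2) with 0 by ring; apply exp_0).
  pose proof (gauss_pos y); nra.
Qed.

Lemma is_lim_poly_gauss_p_infty : is_lim (fun y => (y ^ 2 + 2) * gauss y) p_infty 0.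
Proof.
  apply (is_lim_of_abs_le _ (fun y => 4 / y)); [| apply is_lim_div_p_infty].
  exists 0; intros y Hy; rewrite Rminus_0_r, Rabs_pos_eq by (pose proof (gauss_pos y); nra).
  pose proof (sq_poly_gauss_le y); pose proof (gauss_pos y).
  apply Rmult_le_reg_r with y; [lra|].
  replace (4 / y * y) with 4 by (field; lra); nra.
Qed.

Lemma is_lim_poly_gauss_m_infty : is_lim (fun y => (y ^ 2 + 2) * gauss y) m_infty 0.
Proof.
  apply (is_lim_of_abs_le _ (fun y => -4 / y)); [| apply is_lim_div_m_infty].
  exists 0; intros y Hy; rewrite Rminus_0_r, Rabs_pos_eq by (pose proof (gauss_pos y); nra).
  pose proof (sq_poly_gauss_le y); pose proof (gauss_pos y).
  apply Rmult_le_reg_r with (- y); [lra|].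
  replace (-4 / y * - y) with 4 by (field; lra); nra.
Qed.

Lemma is_lim_sqrt_sub_gauss_defect (x : Rbar) :
  is_lim (fun y => (y ^ 2 + 2) * gauss y) x 0 ->
  is_lim (fun y => sqrt (PI / 4 - gauss_defect y)) x (sqrt PI / 2).
Proof.
  intros Hx.
  replace (sqrt PI / 2) with (sqrt (PI / 4 - 0))
    by (rewrite Rminus_0_r, <- sqrt_PI_div_2_sq; apply sqrt_pow2; pose proof sqrt_PI_pos; lra).
  apply (is_lim_comp_continuous (fun y => PI / 4 - gauss_defect y)); [| apply continuous_sqrt].
  apply (is_lim_minus' (fun _ => PI / 4)); [apply is_lim_const |].
  apply (is_lim_of_abs_le _ (fun y => (y ^ 2 + 2) * gauss y)); [| exact Hx].
  apply filter_forall; intros y.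
  pose proof (gauss_defect_bounds y); pose proof (gauss_pos y).
  rewrite Rminus_0_r, Rabs_pos_eq by lra; nra.
Qed.

Lemma is_lim_gauss_int_p_infty : is_lim gauss_int p_infty (sqrt PI / 2).
Proof.
  apply (is_lim_ext_loc (fun y => sqrt (PI / 4 - gauss_defect y))).
  - exists 0; intros y Hy.
    rewrite <- (gauss_int_sq_add_defect y), Rplus_minus_r.
    apply sqrt_pow2, gauss_int_nonneg; lra.
  - apply is_lim_sqrt_sub_gauss_defect, is_lim_poly_gauss_p_infty.
Qed.

Lemma is_lim_gauss_int_m_infty : is_lim gauss_int m_infty (- (sqrt PI / 2)).
Proof.
  apply (is_lim_ext_loc (fun y => - sqrt (PI / 4 - gauss_defect y))).
  - exists 0; intros y Hy.
    rewrite <- (gauss_int_sq_add_defect y), Rplus_minus_r.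
    replace (gauss_int y ^ 2) with ((- gauss_int y) ^ 2) by ring.
    rewrite sqrt_pow2; [ring |]; pose proof (gauss_int_nonpos y); lra.
  - apply (is_lim_opp _ _ (sqrt PI / 2)), is_lim_sqrt_sub_gauss_defect.
    apply is_lim_poly_gauss_m_infty.
Qed.

(** * The Gaussian tail and the ratio g *)

Definition gauss_tail (y : R) : R := sqrt PI / 2 - gauss_int y.

Lemma is_RInt_gen_gauss_tail (y : R) :
  is_RInt_gen gauss (at_point y) (Rbar_locally p_infty) (gauss_tail y).
Proof.
  apply is_RInt_gen_derive_p_infty.
  - intros; apply is_derive_gauss_int.
  - intros; apply continuous_gauss.
  - apply is_lim_gauss_int_p_infty.
Qed.

Lemma erfc_gauss_tail (y : R) : sqrt PI * erfc y = 2 * gauss_tail y.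
Proof.
  unfold erfc; change (fun x => exp (- x ^ 2)) with gauss.
  rewrite (is_RInt_gen_unique _ _ (is_RInt_gen_gauss_tail y)).
  pose proof sqrt_PI_pos; field; lra.
Qed.

Lemma gauss_tail_pos (y : R) : 0 < gauss_tail y.
Proof. pose proof (abs_gauss_int_lt y) as Hlt; apply Rabs_def2 in Hlt; unfold gauss_tail; lra. Qed.

Lemma sqrt_PI_div_2_le_gauss_tail (y : R) : y <= 0 -> sqrt PI / 2 <= gauss_tail y.
Proof. intros Hy; pose proof (gauss_int_nonpos y Hy); unfold gauss_tail; lra. Qed.

Lemma is_derive_gauss_tail (y : R) : is_derive gauss_tail y (- gauss y).
Proof.
  unfold gauss_tail; auto_derive; use_derive is_derive_gauss_int; ring.
Qed.

Lemma is_lim_gauss_tail_p_infty : is_lim gauss_tail p_infty 0.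
Proof.
  replace (Finite 0) with (Finite (sqrt PI / 2 - sqrt PI / 2)) by (f_equal; ring).
  apply (is_lim_minus' (fun _ => sqrt PI / 2));
    [apply is_lim_const | apply is_lim_gauss_int_p_infty].
Qed.

Lemma is_lim_gauss_tail_m_infty : is_lim gauss_tail m_infty (sqrt PI).
Proof.
  replace (Finite (sqrt PI)) with (Finite (sqrt PI / 2 - - (sqrt PI / 2))) by (f_equal; field).
  apply (is_lim_minus' (fun _ => sqrt PI / 2));
    [apply is_lim_const | apply is_lim_gauss_int_m_infty].
Qed.

Lemma g_eq_gauss_tail (y : R) : g y = gauss y / (2 * gauss_tail y).
Proof. unfold g; rewrite erfc_gauss_tail; reflexivity. Qed.

Lemma g_mul_gauss_tail (y : R) : 2 * gauss_tail y * g y = gauss y.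
Proof. rewrite g_eq_gauss_tail; pose proof (gauss_tail_pos y); field; lra. Qed.

Lemma g_pos (y : R) : 0 < g y.
Proof.
  rewrite g_eq_gauss_tail; pose proof (gauss_pos y); pose proof (gauss_tail_pos y).
  apply Rdiv_lt_0_compat; lra.
Qed.

Lemma is_derive_g (y : R) : is_derive g y (2 * g y ^ 2 - 2 * y * g y).
Proof.
  apply (is_derive_ext (fun y => exp (- y ^ 2) / (2 * gauss_tail y)));
    [intros; now rewrite g_eq_gauss_tail |].
  pose proof (gauss_tail_pos y).
  auto_derive; use_derive is_derive_gauss_tail; [lra |].
  rewrite g_eq_gauss_tail; unfold gauss; simpl; field; lra.
Qed.

Lemma continuous_g (y : R) : continuous g y.
Proof. apply (ex_derive_continuous (V := R_NormedModule)); eexists; apply is_derive_g. Qed.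

Lemma g_le_gauss (y : R) : y <= 0 -> g y <= gauss y.
Proof.
  intros Hy; rewrite g_eq_gauss_tail.
  pose proof (sqrt_PI_div_2_le_gauss_tail y Hy); pose proof (gauss_pos y).
  assert (1 < sqrt PI) by (rewrite <- sqrt_1; apply sqrt_lt_1_alt; pose proof PI2_3_2; lra).
  apply Rmult_le_reg_r with (2 * gauss_tail y); [lra|].
  unfold Rdiv; rewrite Rmult_assoc, Rinv_l by lra; nra.
Qed.

Lemma is_lim_g_mul_m_infty (p : R -> R) :
  (forall y, y <= 0 -> Rabs (p y) <= y ^ 2 + 2) -> is_lim (fun y => p y * g y) m_infty 0.
Proof.
  intros Hp; apply (is_lim_of_abs_le _ (fun y => (y ^ 2 + 2) * gauss y));
    [| apply is_lim_poly_gauss_m_infty].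
  exists 0; intros y Hy; rewrite Rminus_0_r, Rabs_mult, (Rabs_pos_eq (g y)) by (left; apply g_pos).
  apply Rmult_le_compat;
    [apply Rabs_pos | left; apply g_pos | apply Hp; lra | apply g_le_gauss; lra].
Qed.

Lemma ln_gauss_tail (y : R) : ln (gauss_tail y) = - y ^ 2 - ln 2 - ln (g y).
Proof.
  pose proof (gauss_tail_pos y); pose proof (g_pos y).
  assert (Hln : ln (2 * gauss_tail y * g y) = - y ^ 2)
    by (rewrite g_mul_gauss_tail; apply ln_exp).
  rewrite !ln_mult in Hln by lra; lra.
Qed.

(** * The ratio g at +oo *)

Lemma is_lim_gauss_mul_p_infty (q : R -> R) :
  (forall x, 1 <= x -> Rabs (q x) <= x ^ 2 + 2) -> is_lim (fun x => gauss x * q x) p_infty 0.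
Proof.
  intros Hq; apply (is_lim_of_abs_le _ (fun x => (x ^ 2 + 2) * gauss x));
    [| apply is_lim_poly_gauss_p_infty].
  exists 1; intros x Hx; rewrite Rminus_0_r, Rabs_mult, (Rabs_pos_eq (gauss x)), Rmult_comm
    by (left; apply gauss_pos).
  apply Rmult_le_compat_r; [left; apply gauss_pos | apply Hq; lra].
Qed.

(* The first terms of the asymptotic expansion
   T y ~ exp (-y^2) / (2 y) * (1 - 1/(2 y^2) + 3/(4 y^4) - 15/(8 y^6) + ...),
   which alternately over- and underestimates T. *)
Lemma gauss_tail_upper (y : R) : 0 < y ->
  8 * y ^ 5 * gauss_tail y <= gauss y * (4 * y ^ 4 - 2 * y ^ 2 + 3).
Proof.
  intros Hy; set (q := fun x => (4 * x ^ 4 - 2 * x ^ 2 + 3) / (8 * x ^ 5)).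
  assert (Hq : 8 * y ^ 5 * q y = 4 * y ^ 4 - 2 * y ^ 2 + 3)
    by (unfold q; field; pose proof (pow_lt y 5 Hy); lra).
  enough (gauss_tail y - gauss y * q y <= 0 - 0)
    by (pose proof (pow_lt y 5 Hy); pose proof (gauss_pos y); nra).
  apply (le_is_lim_p_infty_of_increasing (fun x => gauss_tail x - gauss x * q x)
           (fun x => 15 / 8 * gauss x / x ^ 6) y).
  - intros x Hx; assert (0 < x ^ 5) by (apply pow_lt; lra).
    unfold q, gauss; auto_derive; use_derive is_derive_gauss_tail; simpl in *; [lra |].
    unfold gauss; simpl; field; lra.
  - intros x Hx; pose proof (gauss_pos x); apply Rdiv_lt_0_compat; [lra | apply pow_lt; lra].
  - apply is_lim_minus'; [apply is_lim_gauss_tail_p_infty | apply is_lim_gauss_mul_p_infty].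
    intros x Hx; assert (1 <= x ^ 2) by nra; assert (x ^ 2 <= x ^ 4) by nra;
      assert (x ^ 4 <= x ^ 5) by (simpl; nra).
    apply abs_div_le; [lra | apply Rabs_le; split; nra].
Qed.

Lemma gauss_tail_lower (y : R) : 0 < y ->
  gauss y * (8 * y ^ 6 - 4 * y ^ 4 + 6 * y ^ 2 - 15) <= 16 * y ^ 7 * gauss_tail y.
Proof.
  intros Hy; set (q := fun x => (8 * x ^ 6 - 4 * x ^ 4 + 6 * x ^ 2 - 15) / (16 * x ^ 7)).
  assert (Hq : 16 * y ^ 7 * q y = 8 * y ^ 6 - 4 * y ^ 4 + 6 * y ^ 2 - 15)
    by (unfold q; field; pose proof (pow_lt y 7 Hy); lra).
  enough (gauss y * q y - gauss_tail y <= 0 - 0)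
    by (pose proof (pow_lt y 7 Hy); pose proof (gauss_pos y); nra).
  apply (le_is_lim_p_infty_of_increasing (fun x => gauss x * q x - gauss_tail x)
           (fun x => 105 / 16 * gauss x / x ^ 8) y).
  - intros x Hx; assert (0 < x ^ 7) by (apply pow_lt; lra).
    unfold q, gauss; auto_derive; use_derive is_derive_gauss_tail; simpl in *; [lra |].
    unfold gauss; simpl; field; lra.
  - intros x Hx; pose proof (gauss_pos x); apply Rdiv_lt_0_compat; [lra | apply pow_lt; lra].
  - apply is_lim_minus'; [apply is_lim_gauss_mul_p_infty | apply is_lim_gauss_tail_p_infty].
    intros x Hx; assert (1 <= x ^ 2) by nra; assert (x ^ 2 <= x ^ 4) by nra;
      assert (x ^ 4 <= x ^ 6) by nra; assert (x ^ 6 <= x ^ 7) by (simpl; nra).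
    apply abs_div_le; [lra | apply Rabs_le; split; nra].
Qed.

Lemma g_lower (y : R) : 0 < y -> 4 * y ^ 6 <= y * g y * (4 * y ^ 4 - 2 * y ^ 2 + 3).
Proof.
  intros Hy; pose proof (gauss_tail_upper y Hy) as HT; rewrite <- g_mul_gauss_tail in HT.
  pose proof (gauss_tail_pos y).
  assert (4 * y ^ 5 <= g y * (4 * y ^ 4 - 2 * y ^ 2 + 3))
    by (apply Rmult_le_reg_l with (2 * gauss_tail y); lra).
  replace (y ^ 6) with (y * y ^ 5) by ring; nra.
Qed.

Lemma g_upper (y : R) : 0 < y -> y * g y * (8 * y ^ 6 - 4 * y ^ 4 + 6 * y ^ 2 - 15) <= 8 * y ^ 8.
Proof.
  intros Hy; pose proof (gauss_tail_lower y Hy) as HT; rewrite <- g_mul_gauss_tail in HT.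
  pose proof (gauss_tail_pos y).
  assert (g y * (8 * y ^ 6 - 4 * y ^ 4 + 6 * y ^ 2 - 15) <= 8 * y ^ 7)
    by (apply Rmult_le_reg_l with (2 * gauss_tail y); lra).
  replace (y ^ 8) with (y * y ^ 7) by ring; nra.
Qed.

(* [u] and [h] stand for [y ^ 2] and [y * g y]. *)
Lemma g_poly_estimates (u h : R) : 4 <= u ->
  4 * u ^ 3 <= h * (4 * u ^ 2 - 2 * u + 3) ->
  h * (8 * u ^ 3 - 4 * u ^ 2 + 6 * u - 15) <= 8 * u ^ 4 ->
  Rabs (u * (u * h - (u ^ 2 + u / 2 - 1 / 2))) <= 2 /\ Rabs (u * (h - (u + 1 / 2))) <= 1.
Proof.
  intros Hu Hlo Hhi.
  assert (0 < 4 * u ^ 2 - 2 * u + 3) by nra.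
  assert (0 < 8 * u ^ 3 - 4 * u ^ 2 + 6 * u - 15) by nra.
  split; apply Rabs_le; split; nra.
Qed.

Lemma g_tail_estimates (y : R) : 2 <= y ->
  Rabs (y ^ 2 * (y ^ 3 * g y - (y ^ 4 + y ^ 2 / 2 - 1 / 2))) <= 2 /\
  Rabs (y ^ 2 * (y * g y - (y ^ 2 + 1 / 2))) <= 1.
Proof.
  intros Hy; pose proof (g_lower y ltac:(lra)); pose proof (g_upper y ltac:(lra)).
  replace (y ^ 2 * (y ^ 3 * g y - (y ^ 4 + y ^ 2 / 2 - 1 / 2)))
    with (y ^ 2 * (y ^ 2 * (y * g y) - ((y ^ 2) ^ 2 + y ^ 2 / 2 - 1 / 2))) by ring.
  apply g_poly_estimates; [nra | |].
  - replace ((y ^ 2) ^ 3) with (y ^ 6) by ring; replace ((y ^ 2) ^ 2) with (y ^ 4) by ring; lra.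
  - replace ((y ^ 2) ^ 3) with (y ^ 6) by ring; replace ((y ^ 2) ^ 2) with (y ^ 4) by ring.
    replace ((y ^ 2) ^ 4) with (y ^ 8) by ring; lra.
Qed.

Lemma is_lim_g_sub_id : is_lim (fun y => g y - y) p_infty 0.
Proof.
  apply (is_lim_p_infty_of_abs_mul_le _ _ 1 2); intros y Hy.
  destruct (g_tail_estimates y Hy) as [_ He].
  apply Rabs_le_between in He; apply Rabs_le_between; nra.
Qed.

Lemma is_lim_sq_mul_g_sub_p_infty : is_lim (fun y => y ^ 2 * g y - y ^ 3 - y / 2) p_infty 0.
Proof.
  apply (is_lim_p_infty_of_abs_mul_le _ _ 1 2); intros y Hy.
  destruct (g_tail_estimates y Hy) as [_ He].
  replace (y * (y ^ 2 * g y - y ^ 3 - y / 2 - 0)) with (y ^ 2 * (y * g y - (y ^ 2 + 1 / 2)))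
    by field; exact He.
Qed.

Lemma is_lim_g_sq_div_p_infty : is_lim (fun y => g y ^ 2 / (1 + y ^ 2)) p_infty 1.
Proof.
  apply (is_lim_p_infty_of_abs_mul_le _ _ 1 2); intros y Hy.
  destruct (g_tail_estimates y Hy) as [_ He].
  set (e := y * g y - (y ^ 2 + 1 / 2)) in He.
  replace (y * (g y ^ 2 / (1 + y ^ 2) - 1))
    with ((1 / 4 + 2 * y ^ 2 * e + e + e ^ 2) / (y * (1 + y ^ 2)))
    by (unfold e; field; nra).
  apply Rabs_le_between in He.
  assert (Hy2 : 4 <= y ^ 2) by nra.
  assert (He' : - (1 / 4) <= e <= 1 / 4) by (split; nra).
  apply abs_div_le; [nra|]; apply Rabs_le_between; nra.
Qed.

(** * The five integrals *)

Ltac continuous_by_derive :=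
  apply (ex_derive_continuous (V := R_NormedModule)); auto_derive; use_derive is_derive_g.

Lemma ex_RInt_gen_gauss_dominated (f : R -> R) :
  (forall x, continuous f x) -> (forall y, y <= 0 -> Rabs (f y) <= - (y + y ^ 3) * gauss y) ->
  ex_RInt_gen f (Rbar_locally m_infty) (at_point 0).
Proof.
  intros Hf Hdom.
  destruct (ex_RInt_gen_dominated (F := Rbar_locally m_infty) f
              (fun y => - (y + y ^ 3) * gauss y) (fun y => / 2 * ((y ^ 2 + 2) * gauss y))
              (fun y => y <= 0) 0 0) as [l Hl]; auto.
  - exists 0; intros; lra.
  - intros u v x Hu Hv [_ Hx]; eapply Rle_trans; [exact Hx | apply Rmax_lub; lra].
  - intros x _; unfold gauss; auto_derive; [easy | simpl; field].
  - intros x _; unfold gauss; apply (ex_derive_continuous (V := R_NormedModule)); auto_derive; easy.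
  - exact (is_lim_scal_l_0 _ _ _ is_lim_poly_gauss_m_infty).
  - exists (opp l); now apply is_RInt_gen_swap.
Qed.

Lemma ex_RInt_gen_inv_sq_dominated (f : R -> R) :
  (forall x, continuous f x) -> (forall y, 2 <= y -> Rabs (f y) <= 2 / y ^ 2) ->
  ex_RInt_gen f (at_point 0) (Rbar_locally p_infty).
Proof.
  intros Hf Hdom.
  apply (ex_RInt_gen_dominated f (fun y => 2 / y ^ 2) (fun y => - 2 / y) (fun y => 2 <= y) 0 0);
    auto.
  - exists 2; intros; lra.
  - intros u v x Hu Hv [Hx _].
    eapply Rle_trans; [apply Rmin_glb; [exact Hu | exact Hv] | exact Hx].
  - intros x Hx; auto_derive; [lra | simpl; field; lra].
  - intros x Hx; apply (ex_derive_continuous (V := R_NormedModule)); auto_derive; simpl; nra.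
  - apply is_lim_div_p_infty.
Qed.

Lemma chi_pos_neg (x : R) : x < 0 -> chi_pos x = 0.
Proof. intros Hx; unfold chi_pos; destruct (Rlt_dec 0 x); lra. Qed.

Lemma chi_pos_pos (x : R) : 0 < x -> chi_pos x = 1.
Proof. intros Hx; unfold chi_pos; destruct (Rlt_dec 0 x); lra. Qed.

Lemma whole_line_fI : whole_line fI.
Proof.
  destruct (ex_RInt_gen_gauss_dominated (fun y => y * g y)) as [l1 H1].
  - intros x; continuous_by_derive.
  - intros y Hy; pose proof (g_le_gauss y Hy); pose proof (g_pos y); pose proof (gauss_pos y).
    assert (y ^ 3 <= 0) by (simpl; nra).
    rewrite Rabs_left1 by nra; nra.
  destruct (ex_RInt_gen_inv_sq_dominated (fun y => y * g y - (y ^ 2 + 1 / 2))) as [l2 H2].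
  - intros x; continuous_by_derive.
  - intros y Hy; destruct (g_tail_estimates y Hy) as [_ He].
    apply abs_le_div_sq in He; [| lra].
    eapply Rle_trans; [exact He |].
    apply Rmult_le_compat_r; [left; apply Rinv_0_lt_compat; nra | lra].
  exists (l1 + l2).
  apply (is_RInt_gen_split fI (fun y => y * g y) (fun y => y * g y - (y ^ 2 + 1 / 2)) 0);
    [| | exact H1 | exact H2];
    intros x Hx; unfold fI; [rewrite chi_pos_neg | rewrite chi_pos_pos]; auto; ring.
Qed.

Lemma whole_line_fI2 : whole_line fI2.
Proof.
  destruct (ex_RInt_gen_gauss_dominated (fun y => y ^ 3 * g y)) as [l1 H1].
  - intros x; continuous_by_derive.
  - intros y Hy; pose proof (g_le_gauss y Hy); pose proof (g_pos y); pose proof (gauss_pos y).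
    assert (y ^ 3 <= 0) by (simpl; nra).
    rewrite Rabs_left1 by nra; nra.
  destruct (ex_RInt_gen_inv_sq_dominated
              (fun y => y ^ 3 * g y - (y ^ 4 + y ^ 2 / 2 - 1 / 2))) as [l2 H2].
  - intros x; continuous_by_derive.
  - intros y Hy; destruct (g_tail_estimates y Hy) as [He _].
    apply abs_le_div_sq in He; [exact He | lra].
  exists (l1 + l2).
  apply (is_RInt_gen_split fI2 (fun y => y ^ 3 * g y)
           (fun y => y ^ 3 * g y - (y ^ 4 + y ^ 2 / 2 - 1 / 2)) 0);
    [| | exact H1 | exact H2];
    intros x Hx; unfold fI2; [rewrite chi_pos_neg | rewrite chi_pos_pos]; auto; ring.
Qed.

Lemma is_RInt_gen_fI3_sub_fI : is_int_R (fun y => fI3 y - fI y) 0.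
Proof.
  set (Fl := fun y => / 2 * g y); set (Fr := fun y => / 2 * (g y - y)).
  replace 0 with ((Fl 0 - 0) + (0 - Fr 0)) by (unfold Fl, Fr; ring).
  apply (is_RInt_gen_split _ (fun y => g y ^ 2 - y * g y) (fun y => g y ^ 2 - y * g y - 1 / 2) 0).
  - intros x Hx; unfold fI3, fI; rewrite chi_pos_neg by exact Hx; ring.
  - intros x Hx; unfold fI3, fI; rewrite chi_pos_pos by exact Hx; field.
  - apply is_RInt_gen_derive_m_infty.
    + intros x _; unfold Fl; auto_derive; use_derive is_derive_g; field.
    + intros x _; continuous_by_derive.
    + apply (is_lim_ext (fun y => / 2 * (1 * g y))); [intros; unfold Fl; ring |].
      apply is_lim_scal_l_0, is_lim_g_mul_m_infty; intros y _; rewrite Rabs_R1; nra.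
  - apply is_RInt_gen_derive_p_infty.
    + intros x _; unfold Fr; auto_derive; use_derive is_derive_g; field.
    + intros x _; continuous_by_derive.
    + apply is_lim_scal_l_0, is_lim_g_sub_id.
Qed.

Lemma is_RInt_gen_fI4_sub_fI2_fI : is_int_R (fun y => fI4 y - (fI2 y - fI y)) 0.
Proof.
  set (Fl := fun y => / 2 * (y ^ 2 * g y)).
  set (Fr := fun y => / 2 * (y ^ 2 * g y - y ^ 3 - y / 2)).
  replace 0 with ((Fl 0 - 0) + (0 - Fr 0)) by (unfold Fl, Fr; field).
  apply (is_RInt_gen_split _ (fun y => y ^ 2 * g y ^ 2 - y ^ 3 * g y + y * g y)
           (fun y => y ^ 2 * g y ^ 2 - y ^ 3 * g y + y * g y - (3 / 2 * y ^ 2 + 1 / 4)) 0).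
  - intros x Hx; unfold fI4, fI2, fI; rewrite chi_pos_neg by exact Hx; ring.
  - intros x Hx; unfold fI4, fI2, fI; rewrite chi_pos_pos by exact Hx; field.
  - apply is_RInt_gen_derive_m_infty.
    + intros x _; unfold Fl; auto_derive; use_derive is_derive_g; field.
    + intros x _; continuous_by_derive.
    + apply is_lim_scal_l_0, is_lim_g_mul_m_infty; intros y _; rewrite Rabs_pos_eq; nra.
  - apply is_RInt_gen_derive_p_infty.
    + intros x _; unfold Fr; auto_derive; use_derive is_derive_g; field.
    + intros x _; continuous_by_derive.
    + apply is_lim_scal_l_0, is_lim_sq_mul_g_sub_p_infty.
Qed.

Lemma is_RInt_gen_fI1 : is_int_R fI1 (ln (2 * sqrt PI) / 2).
Proof.
  pose proof sqrt_PI_pos.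
  set (Phi := fun y => - / 2 * ln (gauss_tail y)).
  set (Fr := fun y => Phi y - y ^ 2 / 2 - ln (1 + y ^ 2) / 4).
  replace (ln (2 * sqrt PI) / 2) with ((Phi 0 - - / 2 * ln (sqrt PI)) + (ln 2 / 2 - Fr 0)).
  2: { unfold Fr; replace (1 + 0 ^ 2) with 1 by ring; rewrite ln_1, ln_mult by lra; field. }
  apply (is_RInt_gen_split _ g (fun y => g y - (y + y / (2 * (1 + y ^ 2)))) 0).
  - intros x Hx; unfold fI1; rewrite chi_pos_neg by exact Hx; ring.
  - intros x Hx; unfold fI1; rewrite chi_pos_pos by exact Hx; ring.
  - apply is_RInt_gen_derive_m_infty; [| intros; apply continuous_g |].
    + intros x _; pose proof (gauss_tail_pos x).
      unfold Phi; auto_derive; use_derive is_derive_gauss_tail; [lra |].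
      rewrite g_eq_gauss_tail; field; lra.
    + exact (is_lim_scal_l _ (- / 2) m_infty (ln (sqrt PI))
               (is_lim_comp_continuous _ _ _ _ is_lim_gauss_tail_m_infty (continuous_ln _ H))).
  - apply is_RInt_gen_derive_p_infty.
    + intros x _; pose proof (gauss_tail_pos x).
      unfold Fr, Phi; auto_derive; use_derive is_derive_gauss_tail; [lra | nra |].
      rewrite g_eq_gauss_tail; field; nra.
    + intros x _; continuous_by_derive; nra.
    + apply (is_lim_ext (fun y => ln 2 / 2 + / 4 * ln (g y ^ 2 / (1 + y ^ 2)))).
      { intros y; pose proof (g_pos y).
        unfold Fr, Phi; rewrite ln_gauss_tail, ln_div, ln_pow by nra; simpl; field. }
      replace (Finite (ln 2 / 2)) with (Finite (ln 2 / 2 + / 4 * ln 1))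
        by (rewrite ln_1; f_equal; ring).
      apply (is_lim_plus' (fun _ => ln 2 / 2)); [apply is_lim_const |].
      exact (is_lim_scal_l _ (/ 4) p_infty (ln 1) (is_lim_comp_continuous _ _ _ _
               is_lim_g_sq_div_p_infty (continuous_ln 1 Rlt_0_1))).
Qed.

Theorem lemma2p10 :
  whole_line fI /\ whole_line fI1 /\ whole_line fI2 /\ whole_line fI3 /\ whole_line fI4 /\
  I1 = ln (2 * sqrt PI) / 2 /\ I3 = I /\ I4 = I2 - I /\
  (forall b rho T1 T2 Omega : R, 0 < b -> 0 < rho -> Omega <> 0 ->
     sqrt 2 * b * Rpower rho b * ((Rpower rho (2 * b) * T2 - 5 * T1) / Omega) * I
     + (10 * sqrt 2 * b * Rpower rho b / 3) * (T1 / Omega) * I2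
     + sqrt 2 * b * Rpower rho (2 * b) * (T1 / Omega)
         * (2 / (3 * Rpower rho b) - Rpower rho b * (T1 / Omega)) * I3
     - (10 * sqrt 2 * b * Rpower rho b / 3) * (T1 / Omega) * I4
     = sqrt 2 * I * b * Rpower rho b
         * (Rpower rho (2 * b) * (T2 / Omega) - T1 / Omega
            - Rpower rho (2 * b) * (T1 ^ 2 / Omega ^ 2))).
Proof.
  assert (HI : is_int_R fI I)
    by apply (RInt_gen_correct (V := R_CompleteNormedModule)), whole_line_fI.
  assert (HI2 : is_int_R fI2 I2)
    by apply (RInt_gen_correct (V := R_CompleteNormedModule)), whole_line_fI2.
  assert (HI21 : is_int_R (fun y => fI2 y - fI y) (I2 - I))
    by exact (is_RInt_gen_minus _ _ _ _ HI2 HI).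
  destruct (whole_line_int_R _ _ is_RInt_gen_fI1) as [W1 E1].
  destruct (whole_line_int_R _ _ (is_RInt_gen_of_sub _ _ _ HI is_RInt_gen_fI3_sub_fI))
    as [W3 E3].
  destruct (whole_line_int_R _ _ (is_RInt_gen_of_sub _ _ _ HI21 is_RInt_gen_fI4_sub_fI2_fI))
    as [W4 E4].
  refine (conj whole_line_fI (conj W1 (conj whole_line_fI2 (conj W3 (conj W4
            (conj E1 (conj E3 (conj E4 _)))))))).
  (* [Rpower rho b = exp (b * ln rho)] is positive whatever the signs of [b] and [rho]. *)
  intros b rho T1 T2 Omega _ _ HOmega.
  unfold I3, I4; rewrite E3, E4.
  replace (Rpower rho (2 * b)) with (Rpower rho b * Rpower rho b)
    by (rewrite <- Rpower_plus; f_equal; ring).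
  assert (0 < Rpower rho b) by apply exp_pos.
  field; lra.
Qed.
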